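(* In the two-party one-way communication (Holevo–Frenkel–Weiner) scenario, the utility of a one-bit classical channel increases when the assisting shared randomness is increased from $1$ bit to $\log 3$ bits: there exist finite sets $\mathcal{X},\mathcal{B}$ and a payoff function $\beta$ on correlations such that $\sup_{P\in\mathcal{C}_3}\beta(P)>\sup_{P\in\mathcal{C}_2}\beta(P)$.
   Context: Scenario: Alice receives an input $x$ from a finite set $\mathcal{X}$, Bob must output $b$ from a finite set $\mathcal{B}$; a correlation is $P=(P(b|x))$, a task is a real payoff function $\beta$ on correlations, and the utility of a resource is $\sup\beta(P)$ over correlations achievable with it. $\mathcal{C}$: correlations $P(b|x)=\sum_{m\in\{0,1\}}E(m|x)D(b|m)$ with $E(\cdot|x)$ a probability distribution on $\{0,1\}$ for each $x$ and $D(\cdot|m)$ a probability distribution on $\mathcal{B}$ for each $m$ (one bit of classical communication with local randomness). $\mathcal{C}_K$: one bit of classical communication assisted by a shared random variable taking at most $K$ values, i.e. correlations $\sum_{\lambda=1}^{K}q_\lambda P_\lambda$ with $q_\lambda\ge0$, $\sum_\lambda q_\lambda=1$, $P_\lambda\in\mathcal{C}$. Thus $\mathcal{C}_2$ corresponds to (at most) $1$ bit of shared randomness (a binary shared variable with arbitrary bias) and $\mathcal{C}_3$ to $\log 3$ bits (a shared variable with three values). *)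

From HB Require Import structures.
From mathcomp Require Import all_boot all_order all_algebra.
From mathcomp Require Import classical_sets reals constructive_ereal ereal.
Set Implicit Arguments. Unset Strict Implicit. Unset Printing Implicit Defensive.
Import Order.TTheory GRing.Theory Num.Theory.
Local Open Scope ring_scope.
Local Open Scope classical_set_scope.

Section HFW.
Variable R : realType.

Definition is_dist (T : finType) (p : T -> R) : Prop :=
  (forall t, 0 <= p t) /\ \sum_(t : T) p t = 1.

(* a correlation P = (P(b|x)) is represented as a function X -> B -> R *)

Definition one_bit (X B : finType) (P : X -> B -> R) : Prop :=
  exists (E : X -> bool -> R) (D : bool -> B -> R),
    (forall x, is_dist (E x)) /\ (forall m, is_dist (D m)) /\
    forall x b, P x b = \sum_(m : bool) E x m * D m b.

Definition one_bit_SR (K : nat) (X B : finType) (P : X -> B -> R) : Prop :=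
  exists (q : 'I_K -> R) (Ps : 'I_K -> X -> B -> R),
    is_dist q /\ (forall l, one_bit (Ps l)) /\
    forall x b, P x b = \sum_(l : 'I_K) q l * Ps l x b.

Definition utility (K : nat) (X B : finType) (beta : (X -> B -> R) -> R)
  : \bar R :=
  ereal_sup [set (beta P)%:E | P in one_bit_SR K (X:=X) (B:=B)].
End HFW.

(* With a shared variable taking K values, Bob's output distribution is, for
   each value, an affine function of the single number E(1|x); so the
   matrix (P(b|x)) of any C_K correlation is a product through K + 1
   dimensions and has rank at most K + 1.  The payoff det(P)^2 therefore
   vanishes on C_2, whereas the uniform mixture of three deterministic
   strategies ("send whether x = l, and output l or 0 accordingly") gives a
   triangular matrix with positive diagonal, hence a positive payoff in C_3. *)

From mathcomp Require Import all_boot all_order all_algebra.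
From mathcomp Require Import classical_sets reals constructive_ereal ereal.
From mathcomp Require Import ring lra.
Set Implicit Arguments. Unset Strict Implicit. Unset Printing Implicit Defensive.
Import Order.TTheory GRing.Theory Num.Theory.
Local Open Scope ring_scope.

Section OneBitCorrelations.
Variable R : realType.

Lemma one_bit_affine (X B : finType) (P : X -> B -> R) :
  one_bit P ->
  exists (a : X -> R) (c d : B -> R), forall x b, P x b = c b + a x * d b.
Proof.
move=> [E [D [distE [_ defP]]]].
exists (fun x => E x true), (fun b => D false b),
       (fun b => D true b - D false b) => x b.
have [_] := distE x; rewrite defP !big_bool /= => sumE.
have -> : E x false = 1 - E x true by lra.
ring.
Qed.

Lemma one_bit_SR_factor (K : nat) (X B : finType) (P : X -> B -> R) :
  one_bit_SR K P ->
  exists (u : 'I_K.+1 -> X -> R) (v : 'I_K.+1 -> B -> R),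
    forall x b, P x b = \sum_k u k x * v k b.
Proof.
move=> [q [Ps [_ [oneb defP]]]].
have /fin_all_exists [a /fin_all_exists [c /fin_all_exists [d defPs]]] :=
  fun l => one_bit_affine (oneb l).
exists (fun k x => if unlift ord0 k is Some l then q l * a l x else 1).
exists (fun k b => if unlift ord0 k is Some l then d l b
                   else \sum_l q l * c l b) => x b.
rewrite big_ord_recl unlift_none mul1r defP.
under eq_bigr => l _ do rewrite defPs mulrDr.
rewrite big_split /=; congr (_ + _).
by apply: eq_bigr => l _; rewrite liftK mulrA.
Qed.

Definition corr_mx (m n : nat) (P : 'I_m -> 'I_n -> R) : 'M[R]_(m, n) :=
  \matrix_(i, j) P i j.

Lemma rank_corr_mx_one_bit_SR (K m n : nat) (P : 'I_m -> 'I_n -> R) :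
  one_bit_SR K P -> (\rank (corr_mx P) <= K.+1)%N.
Proof.
move=> /one_bit_SR_factor [u [v defP]].
have -> : corr_mx P = (\matrix_(i, k) u k i) *m (\matrix_(k, j) v k j).
  by apply/matrixP => i j; rewrite !mxE defP; apply: eq_bigr => k _; rewrite !mxE.
exact: leq_trans (mxrankM_maxl _ _) (rank_leq_col _).
Qed.

Lemma det_corr_mx_one_bit_SR (K n : nat) (P : 'I_n -> 'I_n -> R) :
  one_bit_SR K P -> (K.+1 < n)%N -> \det (corr_mx P) = 0.
Proof.
move=> /rank_corr_mx_one_bit_SR rankP ltKn; apply/eqP; apply: contraTT ltKn.
rewrite -unitfE -unitmxE -leqNgt => /mxrank_unit <-.
exact: rankP.
Qed.

Lemma deterministic_one_bit (X B : finType) (f : X -> B) (b0 b1 : B) :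
  (forall x, f x = b0 \/ f x = b1) -> one_bit (fun x b => (f x == b)%:R : R).
Proof.
move=> f2.
exists (fun x m => ((f x == b1) == m)%:R),
       (fun m b => ((if m then b1 else b0) == b)%:R).
split; [|split].
- move=> x; split=> [t|]; first exact: ler0n.
  by rewrite big_bool; case: (f x == b1); rewrite /= ?add0r ?addr0.
- move=> m; split=> [t|]; first exact: ler0n.
  rewrite (bigD1 (if m then b1 else b0)) //= eqxx big1 ?addr0 // => b.
  by rewrite eq_sym => /negbTE ->.
- move=> x b; rewrite big_bool /= -!natrM -natrD; congr (_%:R).
  case: (f2 x) => ->; last by case: (b1 == b); case: (b0 == b); rewrite ?eqxx.
  case: (eqVneq b0 b1) => [->|_]; rewrite ?eqxx /=; first by case: (b1 == b).
  by case: (b1 == b); case: (b0 == b).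
Qed.

Definition staircase_strategy (K : nat) (l : 'I_K) (x : 'I_K.+1) : 'I_K.+1 :=
  if x == lift ord0 l then x else ord0.

Definition staircase (K : nat) (x b : 'I_K.+1) : R :=
  \sum_l K%:R^-1 * (staircase_strategy l x == b)%:R.
Arguments staircase : clear implicits.

Lemma staircase_one_bit_SR (K : nat) : (0 < K)%N -> one_bit_SR K (staircase K).
Proof.
move=> K_gt0.
exists (fun _ => K%:R^-1), (fun l x b => (staircase_strategy l x == b)%:R).
split; [split|split=> //].
- by move=> _; rewrite invr_ge0 ler0n.
- by rewrite sumr_const card_ord -(mulr_natr K%:R^-1) mulVf // pnatr_eq0 -lt0n.
- move=> l; apply: (@deterministic_one_bit _ _ _ ord0 (lift ord0 l)) => x.
  by rewrite /staircase_strategy; case: eqP; auto.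
Qed.

Lemma staircase_trig (K : nat) : is_trig_mx (corr_mx (staircase K)).
Proof.
apply/is_trig_mxP => x b ltxb; rewrite mxE /staircase big1 // => l _.
rewrite /staircase_strategy; case: ifP => _.
  by rewrite -(inj_eq val_inj) /= (ltn_eqF ltxb) mulr0.
by rewrite -(inj_eq val_inj) /= (ltn_eqF (leq_ltn_trans (leq0n x) ltxb)) mulr0.
Qed.

Lemma staircase_diag_gt0 (K : nat) (x : 'I_K.+1) :
  (0 < K)%N -> 0 < staircase K x x.
Proof.
move=> K_gt0.
have [l fixx] : exists l : 'I_K, staircase_strategy l x = x.
  case: (unliftP ord0 x) => [l ->|->]; first by exists l; rewrite /staircase_strategy eqxx.
  by exists (Ordinal K_gt0); rewrite /staircase_strategy; case: eqP.
rewrite /staircase (bigD1 l) //= fixx eqxx mulr1.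
apply: ltr_pwDl; first by rewrite invr_gt0 ltr0n.
by apply: sumr_ge0 => l' _; rewrite mulr_ge0 ?invr_ge0 ?ler0n.
Qed.

Lemma det_staircase_gt0 (K : nat) : (0 < K)%N -> 0 < \det (corr_mx (staircase K)).
Proof.
move=> K_gt0; rewrite det_trig ?staircase_trig //.
by apply: prodr_gt0 => x _; rewrite mxE staircase_diag_gt0.
Qed.

End OneBitCorrelations.

Theorem theorem3 (R : realType) :
  exists (X B : finType) (beta : (X -> B -> R) -> R),
    (utility 2 beta < utility 3 beta)%E.
Proof.
exists 'I_4, 'I_4, (fun P => \det (corr_mx P) ^+ 2).
apply: (@le_lt_trans _ _ 0%E).
  apply: ge_ereal_sup => _ [P C2P <-].
  by rewrite (det_corr_mx_one_bit_SR C2P) // expr0n.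
apply: (@lt_le_trans _ _ (\det (corr_mx (@staircase R 3)) ^+ 2)%:E).
  by rewrite lte_fin exprn_gt0 ?det_staircase_gt0.
by apply: ereal_sup_ubound; exists (@staircase R 3) => //; apply: staircase_one_bit_SR.
Qed.
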